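(* Let $G$ be a $(P_6,C_4)$-free graph and let $X$, $Y$, $\{c\}$ be pairwise disjoint subsets of $V(G)$ such that: $Y$ is a clique and every vertex of $X$ has a neighbor in $Y$; $c$ is complete to $X$ and anticomplete to $Y$; and either $G[X]$ is not connected, or there exist vertices $c',c''\in V(G)\setminus(X\cup Y)$ such that $c'$ is complete to $Y$ and anticomplete to $X$, $c''$ is anticomplete to $X\cup Y$, and $c'c''\in E(G)$. Then $G[X]$ is $(P_4,2P_3)$-free.
   Context: $2P_3$ is the disjoint union of two paths on three vertices. Complete/anticomplete: all edges / no edges between the two sets. *)

From mathcomp Require Import all_boot.
Set Implicit Arguments. Unset Strict Implicit. Unset Printing Implicit Defensive.

Definition simple_graph (T : finType) (e : rel T) : Prop :=
  symmetric e /\ irreflexive e.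

Definition path_rel (k : nat) : rel 'I_k :=
  fun i j => (i.+1 == j :> nat) || (j.+1 == i :> nat).

Definition C4_rel : rel 'I_4 :=
  fun i j => (j == (i.+1 %% 4) :> nat) || (i == (j.+1 %% 4) :> nat).

(* 2P_3 : paths 0-1-2 and 3-4-5 *)
Definition twoP3_rel : rel 'I_6 :=
  fun i j => @path_rel 6 i j
             && ~~ ((i == 2 :> nat) && (j == 3 :> nat))
             && ~~ ((i == 3 :> nat) && (j == 2 :> nat)).

Definition has_induced (T : finType) (e : rel T) (S : {set T})
  (k : nat) (h : rel 'I_k) : Prop :=
  exists f : 'I_k -> T,
    injective f /\ (forall i, f i \in S) /\ (forall i j, e (f i) (f j) = h i j).

Definition free_in (T : finType) (e : rel T) (S : {set T})
  (k : nat) (h : rel 'I_k) : Prop := ~ has_induced e S h.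

Definition connected_in (T : finType) (e : rel T) (S : {set T}) : Prop :=
  forall x y, x \in S -> y \in S ->
    connect [rel u v | e u v && (u \in S) && (v \in S)] x y.

Definition complete_to (T : finType) (e : rel T) (v : T) (S : {set T}) : Prop :=
  forall x, x \in S -> e v x.
Definition anticomplete_to (T : finType) (e : rel T) (v : T) (S : {set T}) : Prop :=
  forall x, x \in S -> ~~ e v x.
Definition is_clique (T : finType) (e : rel T) (S : {set T}) : Prop :=
  forall x y, x \in S -> y \in S -> x != y -> e x y.

From mathcomp Require Import all_boot.

Set Implicit Arguments.
Unset Strict Implicit.
Unset Printing Implicit Defensive.

(** C4-freeness forbids two distinct non-adjacent vertices a, b of X to have
   a common neighbour y in the clique Y, since c-a-y-b would be an induced C4.

   For an induced 2P3 a1-a2-a3, b1-b2-b3 in G[X], neighbours y of a2 and y' of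
   b2 in Y are therefore distinct, hence adjacent, and some end a of the first
   path misses y, some end b of the second misses y'; then a-a2-y-y'-b2-b is an
   induced P6.

   For an induced P4 x1-x2-x3-x4 in G[X] and a neighbour y of x1 in Y, y misses
   x3 and x4.  An escape edge pq (q adjacent to y, p not, both anticomplete to
   the P4) then yields the induced P6 p-q-y-x2-x3-x4 or p-q-y-x1-x2-x3.  In the
   second alternative c''c' is an escape edge; if G[X] is disconnected, so is
   z y_z for any z in X outside the component of x1 and any neighbour y_z of z
   in Y. *)

Section InducedPatterns.
Variables (T : finType) (e : rel T).
Hypotheses (e_sym : symmetric e) (e_irr : irreflexive e).

Definition induced_rel (S : {set T}) : rel T :=
  [rel u v | e u v && (u \in S) && (v \in S)].

Ltac edge_of_hyps :=
  first [ exact: e_irr | assumption | by rewrite e_sym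
        | by apply/negbTE | by rewrite e_sym; apply/negbTE ].

Ltac clash_of_hyps :=
  match goal with
  | H : is_true (e ?x ?x) |- _ => by rewrite e_irr in H
  | H : is_true (?x != ?x) |- _ => by rewrite eqxx in H
  | H1 : is_true (e ?x ?y), H2 : is_true (~~ e ?x ?y) |- _ =>
      by rewrite H1 in H2
  | H1 : is_true (e ?x ?y), H2 : is_true (~~ e ?y ?x) |- _ =>
      by rewrite e_sym H1 in H2
  end.

Lemma induced_P6 v0 v1 v2 v3 v4 v5 :
  e v0 v1 -> e v1 v2 -> e v2 v3 -> e v3 v4 -> e v4 v5 ->
  ~~ e v0 v2 -> ~~ e v0 v3 -> ~~ e v0 v4 -> ~~ e v0 v5 -> ~~ e v1 v3 ->
  ~~ e v1 v4 -> ~~ e v1 v5 -> ~~ e v2 v4 -> ~~ e v2 v5 -> ~~ e v3 v5 ->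
  has_induced e [set: T] (@path_rel 6).
Proof.
move=> *; exists (fun i : 'I_6 => nth v0 [:: v0; v1; v2; v3; v4; v5] i).
split; [|split=> [i|]].
- move=> [[|[|[|[|[|[|//]]]]]] ?] [[|[|[|[|[|[|//]]]]]] ?] /=;
    try (by move=> _; apply: val_inj); move=> E; subst; clash_of_hyps.
- by rewrite in_setT.
- by move=> [[|[|[|[|[|[|//]]]]]] ?] [[|[|[|[|[|[|//]]]]]] ?];
    rewrite /path_rel /=; edge_of_hyps.
Qed.

Lemma induced_C4 v0 v1 v2 v3 :
  e v0 v1 -> e v1 v2 -> e v2 v3 -> e v3 v0 -> ~~ e v0 v2 -> ~~ e v1 v3 ->
  v0 != v2 -> v1 != v3 ->
  has_induced e [set: T] C4_rel.
Proof.
move=> *; exists (fun i : 'I_4 => nth v0 [:: v0; v1; v2; v3] i).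
split; [|split=> [i|]].
- move=> [[|[|[|[|//]]]] ?] [[|[|[|[|//]]]] ?] /=;
    try (by move=> _; apply: val_inj); move=> E; subst; clash_of_hyps.
- by rewrite in_setT.
- by move=> [[|[|[|[|//]]]] ?] [[|[|[|[|//]]]] ?]; rewrite /C4_rel /=;
    edge_of_hyps.
Qed.

Lemma connect_induced_path (S : {set T}) k (f : 'I_k.+1 -> T) :
  (forall i, f i \in S) -> (forall i j, e (f i) (f j) = path_rel i j) ->
  forall i, connect (induced_rel S) (f ord0) (f i).
Proof.
move=> fS Hf [i lt_i]; elim: i lt_i => [|i IHi] lt_i.
  by rewrite (_ : Ordinal lt_i = ord0) //; apply: val_inj.
apply: connect_trans (IHi (ltnW lt_i)) (connect1 _).
by rewrite /induced_rel /= Hf !fS /path_rel /= eqxx.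
Qed.

Lemma not_connected_in_witness (S : {set T}) x :
  ~ connected_in e S -> x \in S ->
  exists2 z, z \in S & ~~ connect (induced_rel S) x z.
Proof.
move=> not_conn xS.
have [z /andP[zS x_z]|none] :=
  pickP [pred z | (z \in S) && ~~ connect (induced_rel S) x z].
  by exists z.
have x_conn w : w \in S -> connect (induced_rel S) x w.
  by move=> wS; have := none w; rewrite /= wS => /negbFE.
have symR : symmetric (induced_rel S).
  by move=> u v; rewrite /induced_rel /= e_sym -!andbA [(u \in S) && _]andbC.
case: not_conn => u v uS vS; apply: connect_trans (x_conn v vS).
by rewrite (sym_connect_sym symR); apply: x_conn.
Qed.

Lemma not_connect_nonadj (S : {set T}) x z w :
  z \in S -> w \in S -> connect (induced_rel S) x w ->
  ~~ connect (induced_rel S) x z -> ~~ e z w.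
Proof.
move=> zS wS x_w; apply: contra => zw; apply: connect_trans x_w (connect1 _).
by rewrite /induced_rel /= e_sym zw wS zS.
Qed.

End InducedPatterns.

Local Notation o4 k := (@Ordinal 4 k isT) (only parsing).
Local Notation o6 k := (@Ordinal 6 k isT) (only parsing).

Section CliqueNeighbourhoods.
Variables (T : finType) (e : rel T) (X Y : {set T}) (c : T).
Hypotheses (e_sym : symmetric e) (e_irr : irreflexive e).
Hypotheses (P6_free : free_in e [set: T] (@path_rel 6))
           (C4_free : free_in e [set: T] C4_rel).
Hypotheses (Y_clique : is_clique e Y)
           (X_to_Y : forall x, x \in X -> exists2 y, y \in Y & e x y).
Hypotheses (c_notin_Y : c \notin Y)
           (c_X : complete_to e c X) (c_Y : anticomplete_to e c Y).

Lemma Y_nbrs_disjoint a b y :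
  a \in X -> b \in X -> a != b -> ~~ e a b -> y \in Y -> e a y -> ~~ e b y.
Proof.
move=> aX bX ab nab yY ay; apply/negP => b_y; apply: C4_free.
apply: (induced_C4 e_sym e_irr (c_X aX) ay (_ : e y b) _ (c_Y yY)) => //.
- by rewrite e_sym.
- by rewrite e_sym c_X.
- by apply: contraNneq c_notin_Y => ->.
Qed.

Lemma Y_nbr_misses_one a b y :
  a \in X -> b \in X -> a != b -> ~~ e a b -> y \in Y -> ~~ e a y || ~~ e b y.
Proof.
move=> aX bX ab nab yY; case: (boolP (e a y)) => //= ay.
exact: (Y_nbrs_disjoint aX bX).
Qed.

Lemma Y_nbrs_adj a b y y' :
  a \in X -> b \in X -> a != b -> ~~ e a b ->
  y \in Y -> y' \in Y -> e a y -> e b y' -> e y y'.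
Proof.
move=> aX bX ab nab yY y'Y ay by'; apply: Y_clique => //.
by apply: contraTneq by' => <-; apply: (Y_nbrs_disjoint aX bX).
Qed.

Lemma P6_across_two_P3 a m m' b y y' :
  a \in X -> m \in X -> m' \in X -> b \in X -> y \in Y -> y' \in Y ->
  e a m -> e m y -> ~~ e a y -> e b m' -> e m' y' -> ~~ e b y' ->
  m != m' -> ~~ e a m' -> ~~ e a b -> ~~ e m m' -> ~~ e m b -> False.
Proof.
move=> aX mX m'X bX yY y'Y a_m m_y a_y b_m' m'_y' b_y' mm'_neq a_m' a_b m_m'
  m_b.
have m'a_neq : m' != a by apply: contraNneq m_m' => ->; rewrite e_sym.
have mb_neq : m != b by apply: contraNneq m_m' => ->.
apply: P6_free; apply: (induced_P6 e_sym e_irr a_m m_y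
  (_ : e y y') (_ : e y' m') (_ : e m' b) a_y) => //.
- exact: (Y_nbrs_adj mX m'X).
- by rewrite e_sym.
- by rewrite e_sym.
- by apply: (Y_nbrs_disjoint m'X aX) => //; rewrite e_sym.
- by apply: (Y_nbrs_disjoint m'X mX) => //; rewrite 1?eq_sym 1?e_sym.
- by rewrite e_sym (Y_nbrs_disjoint mX m'X).
- by rewrite e_sym (Y_nbrs_disjoint mX bX).
- by rewrite e_sym.
Qed.

Definition escape_edge k (f : 'I_k -> T) y p q :=
  [/\ e p q, e q y, ~~ e p y, forall i, ~~ e p (f i) & forall i, ~~ e q (f i)].

Lemma P6_of_P4_escape (f : 'I_4 -> T) y p q :
  injective f -> (forall i, f i \in X) ->
  (forall i j, e (f i) (f j) = path_rel i j) ->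
  y \in Y -> e (f ord0) y -> ~ escape_edge f y p q.
Proof.
move=> f_inj fX Hf yY f0y [pq qy py pf qf].
have f_neq i j : i != j -> f i != f j by rewrite (inj_eq f_inj).
have f2y : ~~ e (f (o4 2)) y.
  apply: (Y_nbrs_disjoint (fX _) (fX _) (f_neq ord0 (o4 2) isT)) => //.
  by rewrite Hf.
have f3y : ~~ e (f (o4 3)) y.
  apply: (Y_nbrs_disjoint (fX _) (fX _) (f_neq ord0 (o4 3) isT)) => //.
  by rewrite Hf.
apply: P6_free; case: (boolP (e y (f (o4 1)))) => yf1.
- apply: (induced_P6 e_sym e_irr pq qy yf1
    (_ : e _ (f (o4 2))) (_ : e _ (f (o4 3))) py);
    first [ exact: pf | exact: qf | by rewrite ?Hf | by rewrite e_sym ].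
- apply: (induced_P6 e_sym e_irr pq qy
    (_ : e y (f ord0)) (_ : e _ (f (o4 1))) (_ : e _ (f (o4 2))) py);
    first [ exact: pf | exact: qf | by rewrite ?Hf | by rewrite e_sym ].
Qed.

Lemma escape_edge_of_disconnected k (f : 'I_k.+1 -> T) y :
  ~ connected_in e X -> (forall i, f i \in X) ->
  (forall i j, e (f i) (f j) = path_rel i j) ->
  y \in Y -> e (f ord0) y -> exists p q, escape_edge f y p q.
Proof.
move=> not_conn fX Hf yY f0y.
have [z zX not_f0_z] := not_connected_in_witness e_sym not_conn (fX ord0).
have f_conn := connect_induced_path fX Hf.
have zf i : ~~ e z (f i).
  exact: (not_connect_nonadj e_sym zX (fX i) (f_conn i) not_f0_z).
have z_neq_f i : z != f i by apply: contraNneq not_f0_z => ->.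
have [yz yzY zyz] := X_to_Y zX.
have zy : ~~ e z y.
  apply: (Y_nbrs_disjoint (fX ord0) zX) => //.
  - by rewrite eq_sym z_neq_f.
  - by rewrite e_sym zf.
exists z, yz; split=> // [|i].
- by apply: (Y_nbrs_adj zX (fX ord0)).
- by rewrite e_sym (Y_nbrs_disjoint zX (fX i)).
Qed.

Lemma X_P4_free :
  (~ connected_in e X \/
   exists c' c'', c' \notin X :|: Y /\ c'' \notin X :|: Y /\
     complete_to e c' Y /\ anticomplete_to e c' X /\
     anticomplete_to e c'' (X :|: Y) /\ e c' c'') ->
  free_in e X (@path_rel 4).
Proof.
move=> alt [f [f_inj [fX Hf]]].
have [y yY f0y] := X_to_Y (fX ord0).
suff [p [q]] : exists p q, escape_edge f y p q by apply: P6_of_P4_escape.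
case: alt => [not_conn | [c' [c'' [_ [_ [c'_Y [c'_X [c''_XY c'c'']]]]]]]].
  exact: escape_edge_of_disconnected.
exists c'', c'; split=> [||| i | i].
- by rewrite e_sym.
- exact: c'_Y.
- by apply: c''_XY; rewrite inE yY orbT.
- by apply: c''_XY; rewrite inE fX.
- exact: c'_X.
Qed.

Lemma X_twoP3_free : free_in e X twoP3_rel.
Proof.
move=> [f [f_inj [fX Hf]]].
have f_neq i j : i != j -> f i != f j by rewrite (inj_eq f_inj).
have f_nonadj i j : ~~ twoP3_rel i j -> ~~ e (f i) (f j) by rewrite Hf.
have [y yY f1y] := X_to_Y (fX (o6 1)).
have [y' y'Y f4y'] := X_to_Y (fX (o6 4)).
case/orP: (Y_nbr_misses_one (fX (o6 0)) (fX (o6 2))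
  (f_neq (o6 0) (o6 2) isT) (f_nonadj (o6 0) (o6 2) isT) yY) => a_y;
case/orP: (Y_nbr_misses_one (fX (o6 3)) (fX (o6 5))
  (f_neq (o6 3) (o6 5) isT) (f_nonadj (o6 3) (o6 5) isT) y'Y) => b_y';
by apply: (P6_across_two_P3 (fX _) (fX (o6 1)) (fX (o6 4)) (fX _) yY y'Y
  _ f1y a_y _ f4y' b_y'); rewrite ?Hf ?(inj_eq f_inj).
Qed.

End CliqueNeighbourhoods.

Theorem lemma2p4 (T : finType) (e : rel T) (X Y : {set T}) (c : T) :
  simple_graph e ->
  free_in e [set: T] (@path_rel 6) ->
  free_in e [set: T] C4_rel ->
  [disjoint X & Y] -> c \notin X -> c \notin Y ->
  is_clique e Y ->
  (forall x, x \in X -> exists2 y, y \in Y & e x y) ->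
  complete_to e c X -> anticomplete_to e c Y ->
  (~ connected_in e X \/
   exists c' c'', c' \notin X :|: Y /\ c'' \notin X :|: Y /\
     complete_to e c' Y /\ anticomplete_to e c' X /\
     anticomplete_to e c'' (X :|: Y) /\ e c' c'') ->
  free_in e X (@path_rel 4) /\ free_in e X twoP3_rel.
Proof.
move=> [e_sym e_irr] P6_free C4_free _ _ c_notin_Y Y_clique X_to_Y c_X c_Y alt.
by split; [apply: (X_P4_free (Y := Y) (c := c)) |
           apply: (X_twoP3_free (Y := Y) (c := c))].
Qed.
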